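(* For every $E\subseteq\mathbb{F}_q^2$ and every nonzero $m\in\mathbb{F}_q^2$, $$\sum_{\theta\in O(\mathbb{F}_q^2)}|\widehat{E}(\theta^{-1}m)|^2\lesssim q^{-3}|E|^{3/2}.$$
   Context: Standing assumptions: $q=p^n$ with $p$ a prime, $p\equiv 3\pmod 4$, $n$ odd. $O(\mathbb{F}_q^2)$ is the group of $2\times2$ matrices $\theta$ over $\mathbb{F}_q$ with $\theta^T\theta=I$. Sets are identified with their indicator functions. Fix a nontrivial additive character $\chi$ of $\mathbb{F}_q$; for $g:\mathbb{F}_q^2\to\mathbb{C}$, $\widehat{g}(m)=q^{-2}\sum_{x\in\mathbb{F}_q^2}\chi(-m\cdot x)g(x)$. $A\lesssim B$ means $A\le cB$ with $c$ independent of $q$, $E$, $m$. *)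

From HB Require Import structures.
From mathcomp Require Import all_boot all_order all_algebra all_field.
Set Implicit Arguments. Unset Strict Implicit. Unset Printing Implicit Defensive.
Import Order.TTheory GRing.Theory Num.Theory.
Local Open Scope ring_scope.

Definition dotv (F : fieldType) (m x : 'cV[F]_2) : F := \sum_(i < 2) m i 0 * x i 0.

Definition is_add_char (F : finFieldType) (chi : F -> algC) : Prop :=
  forall x y : F, chi (x + y) = chi x * chi y.

Definition nontrivial_char (F : finFieldType) (chi : F -> algC) : Prop :=
  exists x : F, chi x != 1.

Definition orthogonal2 (F : finFieldType) (th : 'M[F]_2) : bool :=
  th^T *m th == 1%:M.

(* \hat{g}(m) = q^{-2} \sum_x chi(-m.x) g(x), with g the indicator of E *)
Definition fourierE (F : finFieldType) (chi : F -> algC) (E : {set 'cV[F]_2})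
  (m : 'cV[F]_2) : algC :=
  (#|F|%:R ^+ 2)^-1 * \sum_(x in E) chi (- dotv m x).

(** Write [e(v) = \sum_(x in E) chi (- v . x)] and [xi th = th^-1 m]; the sum is
    [q^-4 B] with [B = \sum_th |e (xi th)|^2]. Expanding [|e|^2] gives
    [B = \sum_(x in E) T x] for the extension [T x = \sum_th e (xi th)^* chi (- xi th . x)],
    so Hölder gives [B^4 <= |E|^3 \sum_x |T x|^4], and by Plancherel the latter sum is
    [q^2] times the energy [\sum_w |\sum_(xi th + xi th' = w) e (xi th)^* e (xi th')^*|^2].
    For [q = 3 mod 4] the form [x^2 + y^2] is anisotropic, so circles and lines meet
    in at most two points: the fibers of [xi] have at most 4 elements and each
    [w != 0] has at most 32 representations [xi th + xi th'].  Hence the energy is at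
    most [(4^2 + 32) B^2] and [B <= 7 q |E|^(3/2)]. *)

From mathcomp Require Import all_boot all_order all_algebra all_field.
From mathcomp Require Import zify ring.
Set Implicit Arguments.
Unset Strict Implicit.
Unset Printing Implicit Defensive.
Import Order.TTheory GRing.Theory Num.Theory.
Local Open Scope ring_scope.

Lemma modn4_expn_odd (p n : nat) : (p %% 4 = 3)%N -> odd n -> (p ^ n %% 4 = 3)%N.
Proof.
move=> p_mod4 n_odd; rewrite -modnXm p_mod4.
rewrite -(odd_double_half n) n_odd expnD expn1 -muln2 (mulnC _ 2) expnM.
by rewrite -modnMm -modnXm /= exp1n.
Qed.

Lemma pchar_natr2_neq0 (R : nzRingType) (p : nat) :
  p \in [pchar R] -> p != 2%N -> (2%:R : R) != 0.
Proof.
by move=> chRp p2; rewrite -(dvdn_pcharf chRp) dvdn_prime2 ?(pcharf_prime chRp).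
Qed.

(** In a field of order [3 mod 4], [-1] is not a square: a square root [z] of
    [-1] would satisfy [z = z ^+ #|F| = - z]. *)
Lemma sqr_add_sqr_eq0 (F : finFieldType) : (#|F| %% 4 = 3)%N -> (2%:R : F) != 0 ->
  forall x y : F, x ^+ 2 + y ^+ 2 = 0 -> x = 0.
Proof.
move=> cardF_mod4 two_neq0 x y xy0; apply/eqP; apply/negPn/negP => x_neq0.
set z := y / x.
have z2 : z ^+ 2 = -1.
  have y2 : y ^+ 2 = - x ^+ 2 by apply/eqP; rewrite -addr_eq0 addrC xy0.
  by rewrite /z expr_div_n y2 mulNr divff // expf_neq0.
have cardF : #|F| = (2 * (2 * (#|F| %/ 4) + 1) + 1)%N.
  by rewrite {1}(divn_eq #|F| 4) cardF_mod4; lia.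
have := expf_card z.
rewrite cardF exprD exprM z2 exprD exprM sqrrN !expr1n mul1r !expr1 mulN1r => /eqP.
rewrite eq_sym -subr_eq0 opprK -mulr2n -mulr_natl mulf_eq0 (negPf two_neq0) /= => /eqP z0.
by move: z2; rewrite z0 expr0n /= => /eqP; rewrite eq_sym oppr_eq0 oner_eq0.
Qed.

Lemma dotvE (F : fieldType) (m x : 'cV[F]_2) : dotv m x = m 0 0 * x 0 0 + m 1 0 * x 1 0.
Proof. by rewrite /dotv !big_ord_recl big_ord0 addr0; congr (_ + m _ _ * x _ _); exact: val_inj. Qed.

Lemma dotvDl (F : fieldType) (u v x : 'cV[F]_2) : dotv (u + v) x = dotv u x + dotv v x.
Proof. by rewrite !dotvE !mxE; ring. Qed.

Lemma dotvNl (F : fieldType) (u x : 'cV[F]_2) : dotv (- u) x = - dotv u x.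
Proof. by rewrite !dotvE !mxE; ring. Qed.

Lemma dotvDr (F : fieldType) (u v x : 'cV[F]_2) : dotv x (u + v) = dotv x u + dotv x v.
Proof. by rewrite !dotvE !mxE; ring. Qed.

Lemma dotv_trmx (F : fieldType) (a b : 'cV[F]_2) : dotv a b = (a^T *m b) 0 0.
Proof. by rewrite mxE; apply: eq_bigr => i _; rewrite mxE. Qed.

Lemma dotv_surj (F : fieldType) (w : 'cV[F]_2) (t : F) : w != 0 -> exists y, dotv w y = t.
Proof.
case/matrix0Pn => i [j wij]; rewrite (ord1 j) in wij.
exists ((t / w i 0) *: delta_mx i 0); rewrite /dotv (bigD1 i) //= big1 => [|k ki].
  by rewrite !mxE !eqxx mulr1 addr0 mulrC divfK.
by rewrite !mxE (negPf ki) mulr0 mulr0.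
Qed.

Lemma cV2_ext (F : fieldType) (u v : 'cV[F]_2) : u 0 0 = v 0 0 -> u 1 0 = v 1 0 -> u = v.
Proof.
move=> e0 e1; apply/matrixP => i j; rewrite (ord1 j).
by case: i => [[|[|]]] //= Hi; [rewrite (_ : Ordinal Hi = 0) | rewrite (_ : Ordinal Hi = 1)];
  rewrite //; apply: val_inj.
Qed.

Lemma card_sqr_eq_le2 (R : finIdomainType) (c : R) : (#|[set z : R | z ^+ 2 == c]| <= 2)%N.
Proof.
have [z0 z0c|no_root] := pickP (fun z : R => z ^+ 2 == c); last first.
  by rewrite (_ : [set z | _] = set0) ?cards0 //; apply/setP => z; rewrite !inE no_root.
apply: leq_trans (subset_leq_card (_ : _ \subset [set z0; - z0])) _; last first.
  by rewrite cards2; case: (_ != _).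
apply/subsetP => z; rewrite !inE => zc.
have : (z - z0) * (z + z0) == 0 by rewrite -subr_sqr (eqP zc) (eqP z0c) subrr.
by rewrite mulf_eq0 subr_eq0 addr_eq0.
Qed.

Lemma orthogonal2_invmx (F : finFieldType) (th : 'M[F]_2) :
  orthogonal2 th -> invmx th = th^T /\ th *m th^T = 1%:M.
Proof.
move/eqP => thTth; have th_unit := (mulmx1_unit thTth).2.
by split; rewrite ?(mulmx1C thTth) // -[invmx th]mulmx1 -(mulmx1C thTth) mulmxA mulVmx ?mul1mx.
Qed.

Lemma dotv_orthogonal2 (F : finFieldType) (th : 'M[F]_2) (a : 'cV[F]_2) :
  orthogonal2 th -> dotv (invmx th *m a) (invmx th *m a) = dotv a a.
Proof.
case/orthogonal2_invmx => -> ththT.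
by rewrite !dotv_trmx trmx_mul trmxK mulmxA -(mulmxA a^T) ththT mulmx1.
Qed.

Section Orthogonal.
Variable F : finFieldType.
Hypothesis anisotropic : forall x y : F, x ^+ 2 + y ^+ 2 = 0 -> x = 0.

Lemma dotv_eq0 (v : 'cV[F]_2) : dotv v v = 0 -> v = 0.
Proof.
rewrite dotvE -!expr2 => vv0; have v0 := anisotropic vv0.
have v1 : v 1 0 = 0 by apply: (anisotropic (y := v 0 0)); rewrite addrC.
by apply: cV2_ext; rewrite !mxE.
Qed.

(** A line [dotv u n = k] meets the circle [dotv u u = s] in at most two
    points: on the line, [u] is determined by the coordinate [t u] of [u]
    along [n^\perp], and [dotv n n * s = k ^+ 2 + t u ^+ 2]. *)
Lemma card_circle_line (n : 'cV[F]_2) (s k : F) : n != 0 ->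
  (#|[set u : 'cV[F]_2 | (dotv u u == s) && (dotv u n == k)]| <= 2)%N.
Proof.
move=> n_neq0; set A := [set u | _].
have nn_neq0 : dotv n n != 0 by apply: contra n_neq0 => /eqP/dotv_eq0 ->.
pose t (u : 'cV[F]_2) := - u 0 0 * n 1 0 + u 1 0 * n 0 0.
have u0E (u : 'cV[F]_2) : u 0 0 * dotv n n = dotv u n * n 0 0 - t u * n 1 0.
  by rewrite /t !dotvE; ring.
have u1E (u : 'cV[F]_2) : u 1 0 * dotv n n = dotv u n * n 1 0 + t u * n 0 0.
  by rewrite /t !dotvE; ring.
have t_inj : {in A &, injective t}.
  move=> u v; rewrite !inE => /andP [_ /eqP un] /andP [_ /eqP vn] tuv.
  by apply: cV2_ext; apply: (mulIf nn_neq0); rewrite ?u0E ?u1E un vn tuv.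
rewrite -(card_in_imset t_inj); apply: leq_trans (card_sqr_eq_le2 (dotv n n * s - k ^+ 2)).
apply: subset_leq_card; apply/subsetP => z /imsetP [u]; rewrite !inE => /andP [/eqP <- /eqP <-] ->.
by rewrite /t !dotvE; apply/eqP; ring.
Qed.

Variable m : 'cV[F]_2.
Hypothesis m_neq0 : m != 0.

(** The columns of [th] lie on the unit circle and on the lines
    [dotv u m = v j 0], since [v = th^T *m m]. *)
Lemma card_orthogonal2_fiber (v : 'cV[F]_2) :
  (#|[set th : 'M[F]_2 | orthogonal2 th && (invmx th *m m == v)]| <= 4)%N.
Proof.
pose cols (th : 'M[F]_2) := (col 0 th, col 1 th).
have cols_inj : injective cols.
  move=> A B [eA eB]; apply/matrixP => i j.
  have j01 : j = 0 \/ j = 1 by case: j => [[|[|]]] // Hj; [left | right]; apply: val_inj.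
  by case: j01 => ->; [move/matrixP: eA | move/matrixP: eB] => /(_ i 0); rewrite !mxE.
rewrite -(card_imset _ cols_inj).
pose S (j : 'I_2) := [set u : 'cV[F]_2 | (dotv u u == 1) && (dotv u m == v j 0)].
apply: leq_trans (subset_leq_card (_ : _ \subset setX (S 0) (S 1))) _; last first.
  by rewrite cardsX (leq_mul (card_circle_line _ _ m_neq0) (card_circle_line _ _ m_neq0)).
apply/subsetP => z /imsetP [th]; rewrite !inE => /andP [th_orth /eqP <-] ->.
have [-> _] := orthogonal2_invmx th_orth; move/eqP: th_orth => thTth.
have dotv_col j (b : 'cV[F]_2) : dotv (col j th) b = (th^T *m b) j 0.
  by rewrite /dotv mxE; apply: eq_bigr => i _; rewrite !mxE.
have col_entry j : (th^T *m col j th) j 0 = (th^T *m th) j j.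
  by rewrite !mxE; apply: eq_bigr => i _; rewrite !mxE.
by rewrite /= !dotv_col !col_entry thTth !mxE !eqxx.
Qed.

(** Both summands of [a + b = w] lie on the circle through [m], so [a] also
    lies on the line [dotv a w = dotv w w / 2]; the rest is two fibers. *)
Lemma card_orthogonal2_pairs (w : 'cV[F]_2) : w != 0 ->
  (#|[set ij : 'M[F]_2 * 'M[F]_2 | [&& orthogonal2 ij.1, orthogonal2 ij.2 &
      (invmx ij.1 *m m + invmx ij.2 *m m == w)%R]]| <= 32)%N.
Proof.
move=> w_neq0; set fiber := fun v => [set th | orthogonal2 th && (invmx th *m m == v)].
have two_neq0 : (2%:R : F) != 0.
  apply: contra_neq (oner_neq0 F) => two0; apply: (anisotropic (y := 1)).
  by rewrite expr1n -two0.
set S := [set u : 'cV[F]_2 | (dotv u u == dotv m m) && (dotv u w == dotv w w / 2%:R)].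
rewrite -sum1dep_card (partition_big (fun ij => invmx ij.1 *m m) (mem S)) /=; last first.
  move=> [A B] /and3P [A_orth B_orth /eqP sum_w] /=.
  rewrite inE dotv_orthogonal2 // eqxx /=; set a := invmx A *m m.
  have := dotv_orthogonal2 m B_orth; rewrite -(dotv_orthogonal2 m A_orth) -/a.
  rewrite (_ : invmx B *m m = w - a) => [bb|]; last by rewrite -sum_w addrC addKr.
  have : dotv a w * 2%:R = dotv w w.
    apply/eqP; rewrite -subr_eq0.
    have -> : dotv a w * 2%:R - dotv w w = dotv a a - dotv (w - a) (w - a).
      by rewrite !dotvE !mxE; ring.
    by rewrite bb subrr.
  by move=> <-; rewrite mulfK.
apply: leq_trans (_ : \sum_(u in S) 16 <= _)%N; last first.
  by rewrite sum_nat_const (leq_mul (card_circle_line _ _ w_neq0) (leqnn 16)).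
apply: leq_sum => u _; rewrite sum1dep_card.
apply: leq_trans (subset_leq_card (_ : _ \subset setX (fiber u) (fiber (w - u)))) _.
  apply/subsetP => -[A B]; rewrite !inE /= => /andP [/and3P [A_orth B_orth /eqP sum_w] /eqP au].
  by rewrite A_orth B_orth -sum_w au (addrC u) addrK !eqxx.
by rewrite cardsX (leq_mul (card_orthogonal2_fiber _) (card_orthogonal2_fiber _)).
Qed.

End Orthogonal.

Section AdditiveCharacter.
Variables (F : finFieldType) (chi : F -> algC).
Hypothesis chiD : is_add_char chi.

Lemma add_char_eq0 : chi 0 != 1 -> forall x, chi x = 0.
Proof.
move=> chi0 x; have : chi 0 * (chi 0 - 1) = 0 by rewrite mulrBr mulr1 -chiD addr0 subrr.
move/eqP; rewrite mulf_eq0 subr_eq0 (negPf chi0) orbF => /eqP c0.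
by rewrite -[x]addr0 chiD c0 mulr0.
Qed.

Hypothesis chi0 : chi 0 = 1.

Lemma add_char_mulrn a k : chi (a *+ k) = chi a ^+ k.
Proof. by elim: k => [|k IH]; rewrite ?mulr0n ?expr0 // mulrS exprS chiD IH. Qed.

Lemma add_charNK a : chi (- a) * chi a = 1.
Proof. by rewrite -chiD addNr. Qed.

Lemma norm_add_char a : `|chi a| = 1.
Proof.
have [p p_pr chFp] := finPcharP F.
have : chi a ^+ p = 1 by rewrite -add_char_mulrn (mulrn_pchar chFp) chi0.
move=> /(congr1 (fun z => `|z|)); rewrite normrX normr1 => /eqP.
by rewrite pexpr_eq1 ?prime_gt0 // => /eqP.
Qed.

Lemma conj_add_char a : (chi a)^* = chi (- a).
Proof.
have chi_neq0 : chi a != 0.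
  by apply: contra_eq_neq (add_charNK a) => ->; rewrite mulr0 eq_sym oner_neq0.
have := invC_norm (chi a); rewrite norm_add_char expr1n invr1 mul1r => <-.
by apply: (mulIf chi_neq0); rewrite add_charNK mulVf.
Qed.

Hypothesis chi_nontriv : nontrivial_char chi.

(** Translating [x] by a [y] with [dotv w y = t], where [chi t != 1], multiplies
    the sum by [chi t]. *)
Lemma sum_add_char_dotv (w : 'cV[F]_2) :
  \sum_(x : 'cV[F]_2) chi (dotv w x) = #|F|%:R ^+ 2 * (w == 0)%:R.
Proof.
have [->|w_neq0] := eqVneq w 0.
  under eq_bigr => x _ do rewrite dotvE !mxE !mul0r addr0 chi0.
  by rewrite sumr_const card_mx mulr1 muln1 natrX.
rewrite mulr0; have [t chit] := chi_nontriv; have [y wy] := dotv_surj t w_neq0.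
set S := \sum_x _; have : S = chi t * S.
  rewrite {1}/S (reindex_inj (addIr y)) /= mulr_sumr; apply: eq_bigr => x _.
  by rewrite dotvDr chiD wy mulrC.
by move/eqP; rewrite -subr_eq0 -{1}(mul1r S) -mulrBl mulf_eq0 subr_eq0 eq_sym (negPf chit) => /eqP.
Qed.

End AdditiveCharacter.

Lemma ler_sqr_nneg (R : numDomainType) (x y : R) : 0 <= x -> x <= y -> x ^+ 2 <= y ^+ 2.
Proof. by move=> x0 xy; apply: lerXn2r; rewrite ?nnegrE //; apply: le_trans xy. Qed.

Lemma ler_sum_pred (R : numDomainType) (I : finType) (P : pred I) (f : I -> R) :
  (forall i, 0 <= f i) -> \sum_(i | P i) f i <= \sum_i f i.
Proof. by move=> f0; rewrite [leRHS](bigID P) /= lerDl sumr_ge0. Qed.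

(** Cauchy-Schwarz, from [2 f i f j <= f i ^+ 2 + f j ^+ 2]. *)
Lemma sqr_sum_le_card (R : numDomainType) (I : finType) (P : pred I) (f : I -> R) :
  (forall i, P i -> 0 <= f i) ->
  (\sum_(i | P i) f i) ^+ 2 <= #|P|%:R * \sum_(i | P i) f i ^+ 2.
Proof.
move=> f0.
have amgm : (\sum_(i | P i) f i) ^+ 2 *+ 2 <=
    \sum_(i | P i) \sum_(j | P j) (f i ^+ 2 + f j ^+ 2).
  rewrite expr2 mulr_suml -sumrMnl; apply: ler_sum => i Pi.
  rewrite mulr_sumr -sumrMnl; apply: ler_sum => j Pj.
  by apply: (real_leif_mean_square_scaled _ _).1; apply: ger0_real; apply: f0.
suff sum_sqr : \sum_(i | P i) \sum_(j | P j) (f i ^+ 2 + f j ^+ 2) =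
    (#|P|%:R * \sum_(i | P i) f i ^+ 2) *+ 2 by rewrite sum_sqr lerMn2r in amgm.
rewrite mulr2n; under eq_bigr => i _ do rewrite big_split /= sumr_const.
by rewrite big_split /= sumr_const sumrMnl mulr_natl.
Qed.

Section Fourier.
Variables (F : finFieldType) (chi : F -> algC).
Hypotheses (chiD : is_add_char chi) (chi0 : chi 0 = 1) (chi_nontriv : nontrivial_char chi).
Local Notation q := (#|F|%:R : algC).

Definition charv (v x : 'cV[F]_2) := chi (- dotv v x).

Lemma charvD u v x : charv (u + v) x = charv u x * charv v x.
Proof. by rewrite /charv dotvDl opprD chiD. Qed.

Lemma conj_charv v x : (charv v x)^* = charv (- v) x.
Proof. by rewrite /charv conj_add_char // dotvNl. Qed.

Lemma sum_charv v : \sum_(x : 'cV[F]_2) charv v x = q ^+ 2 * (v == 0)%:R.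
Proof.
under eq_bigr => x _ do rewrite /charv -dotvNl.
by rewrite sum_add_char_dotv // oppr_eq0.
Qed.

Lemma plancherel (G : 'cV[F]_2 -> algC) :
  \sum_(x : 'cV[F]_2) `|\sum_(w : 'cV[F]_2) G w * charv w x| ^+ 2 =
  q ^+ 2 * \sum_(w : 'cV[F]_2) `|G w| ^+ 2.
Proof.
transitivity (\sum_(w : 'cV[F]_2) \sum_(w' : 'cV[F]_2)
    G w * (G w')^* * \sum_(x : 'cV[F]_2) charv (w - w') x).
  under eq_bigr => x _ do rewrite normCK rmorph_sum /= mulr_suml.
  rewrite exchange_big; apply: eq_bigr => w _.
  under eq_bigr => x _ do rewrite mulr_sumr.
  rewrite exchange_big; apply: eq_bigr => w' _.
  rewrite mulr_sumr; apply: eq_bigr => x _.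
  by rewrite rmorphM /= conj_charv charvD; ring.
rewrite mulr_sumr; apply: eq_bigr => w _.
rewrite (bigD1 w) //= sum_charv subrr eqxx big1 ?addr0 => [|w' w'w].
  by rewrite normCK mulr1 mulrC.
by rewrite sum_charv subr_eq0 eq_sym (negPf w'w) !mulr0.
Qed.

Section Energy.
Variables (I : finType) (P : pred I) (xi : I -> 'cV[F]_2) (M N : nat).
Hypothesis card_fiber : forall v, (#|[set i | P i && (xi i == v)]| <= M)%N.
Hypothesis card_pair : forall w : 'cV[F]_2, w != 0 ->
  (#|[set ij : I * I | [&& P ij.1, P ij.2 & (xi ij.1 + xi ij.2 == w)%R]]| <= N)%N.
Variable E : {set 'cV[F]_2}.

Definition charsum v := \sum_(x in E) charv v x.
Definition mass := \sum_(i | P i) `|charsum (xi i)| ^+ 2.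
Definition coef i := (charsum (xi i))^*.
Definition extension x := \sum_(i | P i) coef i * charv (xi i) x.
Definition pair_coef w :=
  \sum_(ij | [&& P ij.1, P ij.2 & xi ij.1 + xi ij.2 == w]) coef ij.1 * coef ij.2.

Lemma sum_fourierE_sqr :
  \sum_(i | P i) `|fourierE chi E (xi i)| ^+ 2 = (q ^+ 4)^-1 * mass.
Proof.
rewrite /mass mulr_sumr; apply: eq_bigr => i _.
by rewrite /fourierE normrM exprMn ger0_norm ?invr_ge0 ?exprn_ge0 // exprVn -exprM.
Qed.

Lemma mass_ge0 : 0 <= mass.
Proof. by apply: sumr_ge0 => i _; rewrite exprn_ge0. Qed.

Lemma mass_coef : mass = \sum_(i | P i) `|coef i| ^+ 2.
Proof. by apply: eq_bigr => i _; rewrite norm_conjC. Qed.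

Lemma mass_extension : mass = \sum_(x in E) extension x.
Proof.
rewrite /mass; under eq_bigr => i _ do rewrite normCK mulrC /charsum mulr_sumr.
by rewrite exchange_big.
Qed.

Lemma extension_sqr x : extension x ^+ 2 = \sum_w pair_coef w * charv w x.
Proof.
rewrite expr2 /extension mulr_suml; under eq_bigr => i _ do rewrite mulr_sumr.
rewrite pair_big /= (partition_big (fun ij => xi ij.1 + xi ij.2) predT) //=.
apply: eq_bigr => w _; rewrite /pair_coef mulr_suml.
apply: eq_big => [ij | ij /andP [_ /eqP <-]]; first by rewrite andbA.
by rewrite charvD; ring.
Qed.

Lemma sum_extension4 : \sum_x `|extension x| ^+ 4 = q ^+ 2 * \sum_w `|pair_coef w| ^+ 2.
Proof.
under eq_bigr => x _ do rewrite (_ : 4 = 2 * 2)%N // exprM -normrX extension_sqr.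
exact: plancherel.
Qed.

Lemma sum_opposite_pairs_le (f : I -> algC) : (forall i, 0 <= f i) ->
  \sum_(ij | [&& P ij.1, P ij.2 & xi ij.1 + xi ij.2 == 0]) f ij.1 <= M%:R * \sum_(i | P i) f i.
Proof.
move=> f0; rewrite -(pair_big_dep P (fun i j => P j && (xi i + xi j == 0)) (fun i j => f i)) /=.
rewrite mulr_sumr; apply: ler_sum => i Pi; rewrite sumr_const -[_ *+ _]mulr_natl.
apply: ler_wpM2r => //; rewrite ler_nat.
apply: leq_trans (card_fiber (- xi i)); rewrite -cardsE subset_leq_card //.
by apply/subsetP => j; rewrite !inE -topredE /= addrC addr_eq0.
Qed.

Lemma norm_pair_coef0_le : `|pair_coef 0| <= M%:R * mass.
Proof.
set S := fun f : I -> algC =>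
  \sum_(ij | [&& P ij.1, P ij.2 & xi ij.1 + xi ij.2 == 0]) f ij.1.
have amgm : `|pair_coef 0| *+ 2 <=
   S (fun i => `|coef i| ^+ 2) + \sum_(ij | [&& P ij.1, P ij.2 & xi ij.1 + xi ij.2 == 0])
     `|coef ij.2| ^+ 2.
  apply: le_trans (ler_wMn2r 2 (ler_norm_sum _ _ _)) _.
  rewrite -big_split /= -sumrMnl; apply: ler_sum => ij _; rewrite normrM.
  by apply: (real_leif_mean_square_scaled _ _).1; apply: ger0_real.
have swap_sum : \sum_(ij | [&& P ij.1, P ij.2 & xi ij.1 + xi ij.2 == 0]) `|coef ij.2| ^+ 2 =
    S (fun i => `|coef i| ^+ 2).
  have swapK : involutive (fun ij : I * I => (ij.2, ij.1)) by case.
  rewrite (reindex_inj (inv_inj swapK)) /=.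
  by apply: eq_bigl => ij; rewrite andbCA addrC.
rewrite swap_sum -mulr2n in amgm.
have := sum_opposite_pairs_le (fun i => exprn_ge0 2 (normr_ge0 (coef i))).
by move/(ler_wMn2r 2)/(le_trans amgm); rewrite lerMn2r -mass_coef.
Qed.

Lemma sqr_norm_pair_coef_le w : w != 0 -> `|pair_coef w| ^+ 2 <=
  N%:R * \sum_(ij | [&& P ij.1, P ij.2 & xi ij.1 + xi ij.2 == w]) `|coef ij.1| ^+ 2 * `|coef ij.2| ^+ 2.
Proof.
move=> w_neq0; apply: le_trans (ler_sqr_nneg (normr_ge0 _) (ler_norm_sum _ _ _)) _.
apply: le_trans (sqr_sum_le_card (fun ij _ => normr_ge0 _)) _.
under eq_bigr => ij _ do rewrite normrM exprMn.
apply: ler_wpM2r; first by apply: sumr_ge0 => ij _; rewrite mulr_ge0 ?exprn_ge0.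
by rewrite ler_nat -cardsE card_pair.
Qed.

Lemma sum_sqr_norm_pair_coef_le : \sum_w `|pair_coef w| ^+ 2 <= (M ^ 2 + N)%:R * mass ^+ 2.
Proof.
rewrite (bigD1 0) //= natrD mulrDl natrX -exprMn.
apply: lerD; first exact: ler_sqr_nneg (normr_ge0 _) norm_pair_coef0_le.
set S := fun w => \sum_(ij | [&& P ij.1, P ij.2 & xi ij.1 + xi ij.2 == w])
  `|coef ij.1| ^+ 2 * `|coef ij.2| ^+ 2.
have S_ge0 w : 0 <= S w by apply: sumr_ge0 => ij _; rewrite mulr_ge0 ?exprn_ge0.
have sum_S : mass ^+ 2 = \sum_w S w.
  rewrite mass_coef expr2 mulr_suml; under eq_bigr => i _ do rewrite mulr_sumr.
  rewrite pair_big /= (partition_big (fun ij => xi ij.1 + xi ij.2) predT) //=.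
  by apply: eq_bigr => w _; apply: eq_bigl => ij; rewrite andbA.
apply: le_trans (ler_sum _ (fun w => sqr_norm_pair_coef_le (w:=w))) _.
by rewrite -mulr_sumr sum_S ler_wpM2l // ler_sum_pred.
Qed.

(** Hölder's inequality [mass ^+ 4 <= #|E| ^+ 3 * \sum_x `|extension x| ^+ 4] (two
    applications of Cauchy-Schwarz) combined with the energy bound. *)
Lemma sqr_mass_le : mass ^+ 2 <= (M ^ 2 + N)%:R * q ^+ 2 * #|E|%:R ^+ 3.
Proof.
set a := fun x => `|extension x|; have a_ge0 x : 0 <= a x by exact: normr_ge0.
have cardE : #|[pred x | x \in E]| = #|E| by apply: eq_card => x; rewrite inE.
have mass_le : mass <= \sum_(x in E) a x.
  by rewrite -(ger0_norm mass_ge0) mass_extension ler_norm_sum.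
have cs1 : (\sum_(x in E) a x) ^+ 2 <= #|E|%:R * \sum_(x in E) a x ^+ 2.
  by rewrite -cardE; apply: sqr_sum_le_card.
have cs2 : (\sum_(x in E) a x ^+ 2) ^+ 2 <= #|E|%:R * \sum_x a x ^+ 4.
  apply: le_trans (sqr_sum_le_card (fun x _ => exprn_ge0 2 (a_ge0 x))) _.
  rewrite cardE ler_wpM2l //; under eq_bigr => x _ do rewrite -exprM.
  by apply: ler_sum_pred => x; rewrite exprn_ge0.
have sumE_ge0 : 0 <= \sum_(x in E) a x by apply: sumr_ge0.
have holder : mass ^+ 4 <= #|E|%:R ^+ 3 * \sum_x a x ^+ 4.
  have mass2_le : mass ^+ 2 <= (\sum_(x in E) a x) ^+ 2 by apply: ler_sqr_nneg mass_ge0 _.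
  have -> : mass ^+ 4 = (mass ^+ 2) ^+ 2 by rewrite -exprM.
  apply: le_trans (ler_sqr_nneg (exprn_ge0 _ mass_ge0) mass2_le) _.
  apply: le_trans (ler_sqr_nneg (exprn_ge0 _ sumE_ge0) cs1) _; rewrite exprMn.
  apply: le_trans (ler_wpM2l (exprn_ge0 2 (ler0n _ #|E|)) cs2) _.
  by rewrite mulrA -exprSr.
have energy : \sum_x a x ^+ 4 <= q ^+ 2 * ((M ^ 2 + N)%:R * mass ^+ 2).
  by rewrite /a sum_extension4 ler_wpM2l ?exprn_ge0 // sum_sqr_norm_pair_coef_le.
have : mass ^+ 2 * mass ^+ 2 <= ((M ^ 2 + N)%:R * q ^+ 2 * #|E|%:R ^+ 3) * mass ^+ 2.
  rewrite -exprD; apply: le_trans holder _.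
  apply: le_trans (ler_wpM2l (exprn_ge0 _ (ler0n _ _)) energy) _.
  by rewrite le_eqVlt; apply/orP; left; apply/eqP; ring.
have [->|mass_neq0] := eqVneq (mass ^+ 2) 0; first by rewrite !mulr_ge0 ?exprn_ge0.
by rewrite ler_pM2r // lt_def mass_neq0 exprn_ge0 // mass_ge0.
Qed.

End Energy.
End Fourier.

Theorem mainTheorem3 :
  exists c : algC, 0 < c /\
  forall (p n : nat) (F : finFieldType) (chi : F -> algC),
    prime p -> (p %% 4 = 3)%N -> odd n -> #|F| = (p ^ n)%N ->
    is_add_char chi -> nontrivial_char chi ->
    forall (E : {set 'cV[F]_2}) (m : 'cV[F]_2), m != 0 ->
      \sum_(th : 'M[F]_2 | orthogonal2 th) `|fourierE chi E (invmx th *m m)| ^+ 2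
        <= c * ((#|F|%:R : algC) ^+ 3)^-1 * (#|E|%:R * sqrtC (#|E|%:R)).
Proof.
exists 7; split; first by rewrite ltr0n.
move=> p n F chi p_pr p_mod4 n_odd cardF chiD chi_nontriv E m m_neq0.
set q : algC := #|F|%:R; set X : algC := #|E|%:R * sqrtC #|E|%:R.
have q_gt0 : 0 < q by rewrite ltr0n; apply/card_gt0P; exists 0.
have q_ge0 : 0 <= q := ltW q_gt0.
have X_ge0 : 0 <= X by rewrite mulr_ge0 ?sqrtC_ge0 ?ler0n.
have [chi0|chi_neq1] := eqVneq (chi 0) 1; last first.
  rewrite big1 => [|th _]; first by rewrite mulr_ge0 // mulr_ge0 // invr_ge0 exprn_ge0.
  by rewrite /fourierE big1 ?mulr0 ?normr0 ?expr0n // => x _; rewrite add_char_eq0.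
have two_neq0 : (2%:R : F) != 0.
  apply: pchar_natr2_neq0 (card_finPcharP cardF p_pr) _.
  by apply/eqP => p2; rewrite p2 in p_mod4.
have cardF_mod4 : (#|F| %% 4 = 3)%N by rewrite cardF; exact: modn4_expn_odd.
have anisotropic := sqr_add_sqr_eq0 cardF_mod4 two_neq0.
have := sqr_mass_le chiD chi0 chi_nontriv (card_orthogonal2_fiber anisotropic m_neq0)
  (card_orthogonal2_pairs anisotropic m_neq0) E.
set B := mass _ _ _ _ => B2_le.
have B_le : B <= 7 * q * X.
  have bound_ge0 : 0 <= 7 * q * X by rewrite mulr_ge0 // mulr_ge0.
  rewrite -ler_sqr ?nnegrE ?mass_ge0 //.
  apply: le_trans B2_le _; rewrite /X !exprMn sqrtCK [_ ^+ 3]exprSr.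
  by rewrite ler_wpM2r ?mulr_ge0 ?exprn_ge0 // ler_wpM2r ?exprn_ge0 // -natrX ler_nat.
rewrite sum_fourierE_sqr -/B.
rewrite (_ : 7 * (q ^+ 3)^-1 * X = (q ^+ 4)^-1 * (7 * q * X)); last by field; rewrite gt_eqF.
by rewrite ler_wpM2l // invr_ge0 exprn_ge0.
Qed.
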